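(* Let $\kappa_2$ be an infinite regular cardinal with $\kappa_2<\mathfrak b$. Then there is no $(\aleph_0,\kappa_2)$-peculiar cut in ${}^\omega\omega$.
   Context: For $f,g\in{}^\omega\omega$: $f\le^*g$ iff $f(n)\le g(n)$ for all but finitely many $n$; $f<^*g$ iff $f(n)<g(n)$ for all but finitely many $n$. $\mathfrak b$ is the least size of a family $F\subseteq{}^\omega\omega$ with no $g$ such that $f\le^*g$ for all $f\in F$. For infinite regular cardinals $\kappa_1,\kappa_2$, a $(\kappa_1,\kappa_2)$-peculiar cut in ${}^\omega\omega$ is a pair $(\langle f_i:i<\kappa_1\rangle,\langle f^\alpha:\alpha<\kappa_2\rangle)$ of sequences in ${}^\omega\omega$ such that: ($\alpha$) $f_j<^*f_i$ for $i<j<\kappa_1$; ($\beta$) $f^\alpha<^*f^\beta$ for $\alpha<\beta<\kappa_2$; ($\gamma$) $f^\alpha<^*f_i$ for all $i<\kappa_1$, $\alpha<\kappa_2$; ($\delta$) if $f\in{}^\omega\omega$ and $f\le^*f_i$ for all $i<\kappa_1$, then $f\le^*f^\alpha$ for some $\alpha<\kappa_2$; ($\varepsilon$) if $f\in{}^\omega\omega$ and $f^\alpha\le^*f$ for all $\alpha<\kappa_2$, then $f_i\le^*f$ for some $i<\kappa_1$. *)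

From Stdlib Require Import Arith.

Definition le_star (f g : nat -> nat) : Prop :=
  exists N, forall n, N <= n -> f n <= g n.
Definition lt_star (f g : nat -> nat) : Prop :=
  exists N, forall n, N <= n -> f n < g n.

Definition injects (A B : Type) : Prop :=
  exists h : A -> B, forall x y, h x = h y -> x = y.

Definition strict_well_order {K : Type} (lt : K -> K -> Prop) : Prop :=
  (forall x y z, lt x y -> lt y z -> lt x z) /\
  (forall x, ~ lt x x) /\
  (forall x y, lt x y \/ x = y \/ lt y x) /\
  well_founded lt.

(* (K, lt) is (the von Neumann ordinal of) an infinite regular cardinal:
   a well-order that is an initial ordinal (every proper initial segment has
   strictly smaller cardinality), infinite, and of cofinality equal to itself
   (every cofinal subset has the full cardinality). *)
Definition infinite_regular_cardinal {K : Type} (lt : K -> K -> Prop) : Prop :=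
  strict_well_order lt /\
  injects nat K /\
  (forall a : K, ~ injects K {x : K | lt x a}) /\
  (forall S : K -> Prop,
      (forall a, exists b, S b /\ (a = b \/ lt a b)) ->
      injects K {x : K | S x}).

Definition unbounded_family (F : (nat -> nat) -> Prop) : Prop :=
  ~ exists g, forall f, F f -> le_star f g.

(* kappa < b, where b = least size of an unbounded family:
   no unbounded family has cardinality <= |K|. *)
Definition lt_bounding_number (K : Type) : Prop :=
  forall F : (nat -> nat) -> Prop,
    unbounded_family F -> ~ injects {f | F f} K.

(* (kappa_1, kappa_2)-peculiar cut, with kappa_1 given by (I, ltI) and
   kappa_2 given by (K, ltK). *)
Definition peculiar_cut {I K : Type} (ltI : I -> I -> Prop) (ltK : K -> K -> Prop)
    (fl : I -> nat -> nat) (fu : K -> nat -> nat) : Prop :=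
  (forall i j, ltI i j -> lt_star (fl j) (fl i)) /\
  (forall a b, ltK a b -> lt_star (fu a) (fu b)) /\
  (forall i a, lt_star (fu a) (fl i)) /\
  (forall f, (forall i, le_star f (fl i)) -> exists a, le_star f (fu a)) /\
  (forall f, (forall a, le_star (fu a) f) -> exists i, le_star (fl i) f).

From Stdlib Require Import Arith Lia Classical IndefiniteDescription.

(* For each a, fu a <* fl j past a threshold d a j.  Fewer than b functions
   d a : nat -> nat are dominated by a single D, and then
   h n := min { fl j n | j <= n, D j <= n } satisfies fu a <=* h <=* fl j for
   all a and j.  By clause (ε) some fl i <=* h <=* fl (i+1) <* fl i, which is
   absurd. *)

Lemma le_star_trans f g h : le_star f g -> le_star g h -> le_star f h.
Proof.
  intros [N1 H1] [N2 H2]; exists (Nat.max N1 N2); intros n Hn.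
  specialize (H1 n ltac:(lia)); specialize (H2 n ltac:(lia)); lia.
Qed.

Lemma le_star_lt_star_contra f g : le_star f g -> lt_star g f -> False.
Proof.
  intros [N1 H1] [N2 H2].
  specialize (H1 (Nat.max N1 N2) ltac:(lia)); specialize (H2 (Nat.max N1 N2) ltac:(lia)); lia.
Qed.

Lemma finite_prefix_bounded (f : nat -> nat) J : exists N, forall j, j < J -> f j <= N.
Proof.
  induction J as [|J [N HN]].
  - exists 0; intros; lia.
  - exists (Nat.max N (f J)); intros j Hj.
    destruct (Nat.eq_dec j J) as [->|]; [lia|].
    specialize (HN j ltac:(lia)); lia.
Qed.

Lemma lt_star_thresholds {K : Type} (fu : K -> nat -> nat) (fl : nat -> nat -> nat) :
  (forall j a, lt_star (fu a) (fl j)) ->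
  exists d : K -> nat -> nat, forall a j n, d a j <= n -> fu a n < fl j n.
Proof.
  intro Hlt.
  destruct (functional_choice (fun (aj : K * nat) N =>
              forall n, N <= n -> fu (fst aj) n < fl (snd aj) n))
    as [d Hd]; [intros [a j]; exact (Hlt j a)|].
  exists (fun a j => d (a, j)); intros a j; exact (Hd (a, j)).
Qed.

Lemma lt_bounding_number_dominated {K : Type} (d : K -> nat -> nat) :
  lt_bounding_number K -> exists D, forall a, le_star (d a) D.
Proof.
  intro Hb.
  set (F := fun f => exists a, f = d a).
  apply NNPP; intro Hunb.
  apply (Hb F); [intros [D HD]; apply Hunb; exists D; intro a; apply HD; exists a; reflexivity|].
  destruct (functional_choice (fun (s : {f | F f}) a => proj1_sig s = d a))
    as [pick Hpick]; [intros [f Hf]; exact Hf|].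
  exists pick; intros s t Heq.
  pose proof (Hpick s) as Es; pose proof (Hpick t) as Et; rewrite Heq in Es.
  destruct s as [x Hx], t as [y Hy]; simpl in Es, Et.
  assert (x = y) as <- by (rewrite Es; exact (eq_sym Et)).
  f_equal; apply proof_irrelevance.
Qed.

Section DiagonalMinimum.

Variables (fl : nat -> nat -> nat) (D : nat -> nat).

(* The minimum of fl j n over j <= k with D j <= n; j = 0 always takes part,
   so the minimum is over a nonempty set. *)
Fixpoint guarded_min (n k : nat) : nat :=
  match k with
  | 0 => fl 0 n
  | S k' => if D (S k') <=? n then Nat.min (guarded_min n k') (fl (S k') n)
            else guarded_min n k'
  end.

Definition diagonal_min (n : nat) : nat := guarded_min n n.

Lemma guarded_min_le n k j : j <= k -> D j <= n -> guarded_min n k <= fl j n.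
Proof.
  induction k as [|k IH]; intros Hj HD; simpl.
  - replace j with 0 by lia; lia.
  - destruct (Nat.eqb_spec j (S k)) as [->|Hne].
    + rewrite (proj2 (Nat.leb_le _ _) HD); lia.
    + destruct (D (S k) <=? n); specialize (IH ltac:(lia) HD); lia.
Qed.

Lemma le_guarded_min n k x : x <= fl 0 n ->
  (forall j, j <= k -> D j <= n -> x <= fl j n) -> x <= guarded_min n k.
Proof.
  induction k as [|k IH]; intros H0 H; simpl; auto.
  destruct (Nat.leb_spec (D (S k)) n).
  - apply Nat.min_glb; [apply IH; auto|apply H; lia].
  - apply IH; auto.
Qed.

Lemma diagonal_min_le_star j : le_star diagonal_min (fl j).
Proof.
  exists (Nat.max j (D j)); intros n Hn; apply guarded_min_le; lia.
Qed.

Lemma le_star_diagonal_min (g : nat -> nat) (d : nat -> nat) :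
  (forall j n, d j <= n -> g n <= fl j n) -> le_star d D -> le_star g diagonal_min.
Proof.
  intros Hg [J HJ].
  destruct (finite_prefix_bounded d J) as [N HN].
  exists (Nat.max N (d 0)); intros n Hn.
  apply le_guarded_min; [apply Hg; lia|].
  intros j _ HDj; apply Hg.
  destruct (Nat.lt_ge_cases j J) as [Hl|Hl].
  - specialize (HN j Hl); lia.
  - specialize (HJ j Hl); lia.
Qed.

End DiagonalMinimum.

Theorem proposition2p10 (K : Type) (ltK : K -> K -> Prop)
  (Hreg : infinite_regular_cardinal ltK) (Hb : lt_bounding_number K) :
  ~ exists (fl : nat -> nat -> nat) (fu : K -> nat -> nat),
      peculiar_cut Nat.lt ltK fl fu.
Proof.
  intros [fl [fu [Hdecr [_ [Hbelow [_ Hcut]]]]]].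
  destruct (lt_star_thresholds fu fl Hbelow) as [d Hd].
  destruct (lt_bounding_number_dominated d Hb) as [D HD].
  set (h := diagonal_min fl D).
  assert (Hup : forall a, le_star (fu a) h).
  { intro a; apply (le_star_diagonal_min fl D (fu a) (d a)); [|exact (HD a)].
    intros j n Hn; apply Nat.lt_le_incl, Hd, Hn. }
  destruct (Hcut h Hup) as [i Hi].
  apply (le_star_lt_star_contra (fl i) (fl (S i))).
  - exact (le_star_trans _ _ _ Hi (diagonal_min_le_star fl D (S i))).
  - apply Hdecr; lia.
Qed.
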